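(* Let $b\ge 1$, $d=b+1$, $n=2b$, and let $f,g:\mathbb{F}_2^d\to\mathbb{F}_2$ be nonlinear bipermutive local rules whose no-boundary CA $F,G:\mathbb{F}_2^{2b}\to\mathbb{F}_2^b$ form a pair of orthogonal CA, with superposition S-box $H:\mathbb{F}_2^n\to\mathbb{F}_2^n$. Let $v=(v_1,\dots,v_n)\in\mathbb{F}_2^n\setminus\{\underline 0\}$ with $nl(v\cdot H)=0$. (i) If $v_b=v_n=0$, then the right shift $v'=(0,v_1,\dots,v_{n-1})$ satisfies $nl(v'\cdot H)=0$. (ii) If $v_1=v_{b+1}=0$, then the left shift $v'=(v_2,\dots,v_n,0)$ satisfies $nl(v'\cdot H)=0$.
   Context: A local rule $f:\mathbb{F}_2^d\to\mathbb{F}_2$ is bipermutive if $f(x_1,\dots,x_d)=x_1\oplus\varphi(x_2,\dots,x_{d-1})\oplus x_d$ for some $\varphi:\mathbb{F}_2^{d-2}\to\mathbb{F}_2$; it is nonlinear if its algebraic degree is at least 2. With $b=d-1$, the no-boundary CA of $f$ is $F:\mathbb{F}_2^{2b}\to\mathbb{F}_2^b$, $F(x)_i=f(x_i,\dots,x_{i+b})$, $i=1,\dots,b$; it defines the $2^b\times 2^b$ Latin square with entry $F(x\|y)$ at row $x$, column $y$ ($x,y\in\mathbb{F}_2^b$, $\|$ = concatenation). $F,G$ with bipermutive rules of equal diameter are orthogonal if $(x,y)\mapsto(F(x\|y),G(x\|y))$ is a bijection of $\mathbb{F}_2^b\times\mathbb{F}_2^b$. The superposition S-box is $H(x)=F(x)\|G(x)$,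 i.e. $H(x)_i=f(x_i,\dots,x_{i+b})$, $H(x)_{b+i}=g(x_i,\dots,x_{i+b})$ for $i=1,\dots,b$. The component function is $v\cdot H(x)=\bigoplus_i v_iH(x)_i$, and $nl(h)$ is the minimum Hamming distance of $h$ to the affine Boolean functions ($nl(h)=0$ iff $h$ is affine). *)

(* F_2 is modelled by bool (xor = addb, product = andb).
   Indices are 0-based: paper coordinate x_i is index i-1. *)
From mathcomp Require Import all_boot.
Set Implicit Arguments. Unset Strict Implicit. Unset Printing Implicit Defensive.

Definition vec (m : nat) := {ffun 'I_m -> bool}.

(* total access by a natural-number index (false out of range; never used out of range below) *)
Definition getv m (x : vec m) (k : nat) : bool :=
  match @insub nat (fun k => k < m) 'I_m k with Some i => x i | None => false end.

Definition concat m (x y : vec m) : vec (m + m) :=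
  [ffun k : 'I_(m + m) => if k < m then getv x k else getv y (k - m)].

(* Algebraic normal form coefficient of the monomial x^u (Moebius transform) *)
Definition anf_coef m (h : vec m -> bool) (u : vec m) : bool :=
  \big[addb/false]_(x : vec m | [forall i, x i ==> u i]) h x.

Definition alg_deg m (h : vec m -> bool) : nat :=
  \max_(u : vec m | anf_coef h u) #|[set i | u i]|.

Definition bipermutive b (f : vec b.+1 -> bool) : Prop :=
  exists phi : vec b.-1 -> bool, forall x : vec b.+1,
    f x = addb (addb (getv x 0) (phi [ffun j : 'I_b.-1 => getv x j.+1])) (getv x b).

Definition nonlinear m (h : vec m -> bool) : Prop := 2 <= alg_deg h.

Definition nbCA b (f : vec b.+1 -> bool) (x : vec (b + b)) : vec b :=
  [ffun i : 'I_b => f [ffun j : 'I_b.+1 => getv x (i + j)]].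

Definition orthogonal b (f g : vec b.+1 -> bool) : Prop :=
  bijective (fun p : vec b * vec b =>
               (nbCA f (concat p.1 p.2), nbCA g (concat p.1 p.2))).

Definition sbox b (f g : vec b.+1 -> bool) (x : vec (b + b)) : vec (b + b) :=
  concat (nbCA f x) (nbCA g x).

Definition dot m (v x : vec m) : bool := \big[addb/false]_(i : 'I_m) (v i && x i).
Definition component m (v : vec m) (H : vec m -> vec m) (x : vec m) : bool := dot v (H x).

Definition affine_fun m (a : vec m) (c : bool) (x : vec m) : bool := addb c (dot a x).
Definition nl m (h : vec m -> bool) : nat :=
  \big[minn/#|{: vec m}|]_(p : vec m * bool)
     #|[set x : vec m | h x != affine_fun p.1 p.2 x]|.

Definition shiftR m (v : vec m) : vec m :=
  [ffun k : 'I_m => if k == 0 :> nat then false else getv v k.-1].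
Definition shiftL m (v : vec m) : vec m :=
  [ffun k : 'I_m => getv v k.+1].

From mathcomp Require Import all_boot zify.
Set Implicit Arguments. Unset Strict Implicit.

(* The shifts are adjoint for the dot product: (shiftR u).w = u.(shiftL w).
      Hence if v.H = a.x + c is affine and H commutes with the left shift on
      the support of v, i.e. H(shiftL x)_k = H(x)_{k+1} whenever v_k = 1, then
      (shiftR v).H(x) = v.shiftL(H x) = v.H(shiftL x) = (shiftR a).x + c is
      affine again; symmetrically for the left shift of v.
   2. The superposition S-box H = F || G of two no-boundary CA commutes with
      the shifts away from the seams of the two halves: the only coordinates
      where shift-equivariance fails are b-1 and 2b-1 for the left shift and
      0 and b for the right shift, exactly those the hypotheses of lemma3
      force to vanish in v. *)

Lemma getv_lt m (x : vec m) k (Hk : k < m) : getv x k = x (Ordinal Hk).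
Proof. by rewrite /getv insubT; congr (x _); apply: val_inj. Qed.

Lemma getv_ord m (x : vec m) (i : 'I_m) : getv x i = x i.
Proof. by rewrite (getv_lt x (ltn_ord i)); congr (x _); apply: val_inj. Qed.

Lemma getv_ge m (x : vec m) k : m <= k -> getv x k = false.
Proof. by move=> Hk; rewrite /getv insubF // ltnNge Hk. Qed.

Lemma getv_shiftL m (x : vec m) k : getv (shiftL x) k = getv x k.+1.
Proof.
case: (ltnP k m) => Hk; first by rewrite (getv_lt _ Hk) ffunE.
by rewrite !getv_ge // ltnW.
Qed.

Lemma getv_shiftR m (x : vec m) k : k < m ->
  getv (shiftR x) k = if k == 0 then false else getv x k.-1.
Proof. by move=> Hk; rewrite (getv_lt _ Hk) ffunE. Qed.

Lemma getv_concat m (p q : vec m) k :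
  getv (concat p q) k = if k < m then getv p k else getv q (k - m).
Proof.
case: (ltnP k (m + m)) => Hk; first by rewrite (getv_lt _ Hk) ffunE.
rewrite getv_ge //; case: ifP => [|_]; first by lia.
by rewrite getv_ge //; lia.
Qed.

Lemma getv_nbCA b (f : vec b.+1 -> bool) x k : k < b ->
  getv (nbCA f x) k = f [ffun j : 'I_b.+1 => getv x (k + j)].
Proof. by move=> Hk; rewrite (getv_lt _ Hk) ffunE. Qed.

Lemma dotE m (u w : vec m) :
  dot u w = \big[addb/false]_(0 <= k < m) (getv u k && getv w k).
Proof. by rewrite /dot big_mkord; apply: eq_bigr => i _; rewrite !getv_ord. Qed.

Lemma dotC m (u w : vec m) : dot u w = dot w u.
Proof. by apply: eq_bigr => i _; rewrite andbC. Qed.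

Lemma dot_shiftR m (u w : vec m) : dot (shiftR u) w = dot u (shiftL w).
Proof.
rewrite !dotE; case: m u w => [|m] u w; first by rewrite !big_geq.
rewrite big_nat_recl // big_nat_recr //= getv_shiftR // eqxx /=.
rewrite getv_shiftL (getv_ge w (leqnn _)) andbF addbF.
by apply: eq_big_nat => k /andP [_ Hk]; rewrite getv_shiftR // getv_shiftL.
Qed.

Lemma dot_shiftL m (u w : vec m) : dot (shiftL u) w = dot u (shiftR w).
Proof. by rewrite dotC -dot_shiftR dotC. Qed.

Lemma dot_congr m (v w w' : vec m) :
  (forall k, k < m -> getv v k -> getv w k = getv w' k) -> dot v w = dot v w'.
Proof.
move=> Hw; rewrite !dotE; apply: eq_big_nat => k /andP [_ Hk].
by case Hv: (getv v k) => //=; rewrite Hw.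
Qed.

Lemma bigmin_eq0 (I : finType) (N : nat) (F : I -> nat) : 0 < N ->
  \big[minn/N]_(i : I) F i = 0 <-> exists i, F i = 0.
Proof.
move=> N_gt0; split => [min0 | [i Fi0]].
  case: (pickP (fun i => F i == 0)) => [i /eqP | noF0]; first by exists i.
  suff : 0 < \big[minn/N]_(i : I) F i by rewrite min0.
  apply: (big_ind (fun n => 0 < n)) => // [n n' Hn Hn' | i _].
    by rewrite leq_min Hn Hn'.
  by rewrite lt0n noF0.
apply/eqP; rewrite -leqn0 -Fi0.
elim: (index_enum I) (mem_index_enum i) => [|j s IHs] //.
rewrite in_cons big_cons geq_min => /orP [/eqP <-|i_s].
  by rewrite leqnn.
by rewrite IHs ?orbT.
Qed.

Lemma nl0P m (h : vec m -> bool) :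
  nl h = 0 <-> exists a c, h =1 affine_fun a c.
Proof.
rewrite /nl bigmin_eq0 ?card_gt0; last by apply/card_gt0P; exists [ffun => false].
split => [[[a c] /eqP] | [a [c Hh]]].
  rewrite cards_eq0 => /eqP Hac; exists a, c => x.
  by apply/eqP/negPn/negP => Hx; have := in_set0 x; rewrite -Hac inE Hx.
exists (a, c); apply/eqP; rewrite cards_eq0; apply/eqP/setP => x.
by rewrite inE in_set0 Hh eqxx.
Qed.

Lemma affine_fun_shiftL m (a x : vec m) c :
  affine_fun a c (shiftL x) = affine_fun (shiftR a) c x.
Proof. by rewrite /affine_fun dot_shiftR. Qed.

Lemma affine_fun_shiftR m (a x : vec m) c :
  affine_fun a c (shiftR x) = affine_fun (shiftL a) c x.
Proof. by rewrite /affine_fun dot_shiftL. Qed.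

Lemma component_affine_shiftR m (v : vec m) (H : vec m -> vec m) :
  (forall x k, k < m -> getv v k -> getv (H (shiftL x)) k = getv (H x) k.+1) ->
  nl (component v H) = 0 -> nl (component (shiftR v) H) = 0.
Proof.
move=> H_shift /nl0P [a [c Hv]]; apply/nl0P; exists (shiftR a), c => x.
have -> : component (shiftR v) H x = component v H (shiftL x).
  rewrite /component dot_shiftR; apply: dot_congr => k Hk vk.
  by rewrite getv_shiftL H_shift.
by rewrite Hv affine_fun_shiftL.
Qed.

Lemma component_affine_shiftL m (v : vec m) (H : vec m -> vec m) :
  (forall x k, 0 < k < m -> getv v k -> getv (H (shiftR x)) k = getv (H x) k.-1) ->
  getv v 0 = false ->
  nl (component v H) = 0 -> nl (component (shiftL v) H) = 0.
Proof.
move=> H_shift v0 /nl0P [a [c Hv]]; apply/nl0P; exists (shiftL a), c => x.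
have -> : component (shiftL v) H x = component v H (shiftR x).
  rewrite /component dot_shiftL; apply: dot_congr => k Hk vk.
  have k_gt0 : 0 < k by case: k Hk vk => //; rewrite v0.
  by rewrite getv_shiftR // ifN_eq -?lt0n // H_shift ?k_gt0.
by rewrite Hv affine_fun_shiftR.
Qed.

Lemma nbCA_shiftL b (f : vec b.+1 -> bool) (x : vec (b + b)) k : k.+1 < b ->
  getv (nbCA f (shiftL x)) k = getv (nbCA f x) k.+1.
Proof.
move=> Hk; rewrite !getv_nbCA ?(ltnW Hk) //.
by congr f; apply/ffunP => j; rewrite !ffunE getv_shiftL addSn.
Qed.

Lemma nbCA_shiftR b (f : vec b.+1 -> bool) (x : vec (b + b)) k : 0 < k < b ->
  getv (nbCA f (shiftR x)) k = getv (nbCA f x) k.-1.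
Proof.
case/andP=> k_gt0 k_lt; rewrite !getv_nbCA; try lia.
congr f; apply/ffunP => j; rewrite !ffunE; have j_le := ltn_ord j.
rewrite getv_shiftR; last by lia.
rewrite ifN_eq -?lt0n ?addn_gt0 ?k_gt0 //; congr (getv x _); lia.
Qed.

Lemma sbox_shiftL b (f g : vec b.+1 -> bool) (x : vec (b + b)) k :
  k.+1 < b + b -> k.+1 != b ->
  getv (sbox f g (shiftL x)) k = getv (sbox f g x) k.+1.
Proof.
move=> Hk Hkb; rewrite /sbox !getv_concat.
case: (ltnP k.+1 b) => Hkb'.
  by rewrite ltnW // nbCA_shiftL.
have -> : (k < b) = false by lia.
by rewrite nbCA_shiftL ?subSn //; lia.
Qed.

Lemma sbox_shiftR b (f g : vec b.+1 -> bool) (x : vec (b + b)) k :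
  0 < k < b + b -> k != b ->
  getv (sbox f g (shiftR x)) k = getv (sbox f g x) k.-1.
Proof.
move=> Hk Hkb; rewrite /sbox !getv_concat.
case: (ltnP k b) => Hkb'.
  by rewrite (leq_ltn_trans (leq_pred k) Hkb') nbCA_shiftR //; lia.
have -> : (k.-1 < b) = false by lia.
rewrite nbCA_shiftR; first by congr (getv _ _); lia.
lia.
Qed.

Theorem lemma3 (b : nat) (f g : vec b.+1 -> bool) (v : vec (b + b)) :
  1 <= b ->
  bipermutive f -> nonlinear f ->
  bipermutive g -> nonlinear g ->
  orthogonal f g ->
  v != [ffun => false] ->
  nl (component v (sbox f g)) = 0 ->
  (getv v b.-1 = false -> getv v (b + b - 1) = false ->
     nl (component (shiftR v) (sbox f g)) = 0) /\
  (getv v 0 = false -> getv v b = false ->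
     nl (component (shiftL v) (sbox f g)) = 0).
Proof.
move=> _ _ _ _ _ _ _ v_affine; split => [vb1 vn1 | v0 vb].
- apply: component_affine_shiftR v_affine => x k Hk vk.
  apply: sbox_shiftL.
  + rewrite ltn_neqAle Hk andbT; apply/eqP => Ek.
    by move: vk; rewrite (_ : k = b + b - 1) ?vn1 //; lia.
  + by apply/eqP => Ek; move: vk; rewrite (_ : k = b.-1) ?vb1 //; lia.
- apply: component_affine_shiftL v0 v_affine => x k Hk vk.
  by apply: sbox_shiftR => //; apply/eqP => Ek; rewrite Ek vb in vk.
Qed.
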